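(* Let $p,q$ be integers with $1+|p|<|q|$ and $\gcd(p,q)=1$. Then for every nonzero integer $m$, neither $\psi_{p,q}^{-1}(\langle m\xi\rangle)$ nor $\psi_{p,q}^{-1}(\langle m\eta\rangle)$ is a regular language. More generally, for any $\zeta\in\mathbb{Z}^2$ and integer $m>1$, if $\psi_{p,q}^{-1}(\langle\zeta\rangle)$ is not regular then $\psi_{p,q}^{-1}(\langle m\zeta\rangle)$ is not regular.
   Context: Let $p,q$ be integers with $1+|p|<|q|$ and $t(x)=x^2+px-q$. For $f,g\in\mathbb{Z}[x]$ write $f\sim g$ if $t$ divides $f-g$; identify $\mathbb{Z}^2$ with the additive group of $\mathbb{Z}[x]/\langle t\rangle$ via $(h_1,h_2)\mapsto[h_1x+h_2]_\sim$, and put $\eta=[x]_\sim$, $\xi=[1]_\sim$. Let $\Sigma_q=\{-(|q|-1),\dots,|q|-1\}$ with the order $-(|q|-1)<\dots<|q|-1$; a string $a_0a_1\dots a_n\in\Sigma_q^*$ represents the polynomial $a_nx^n+\dots+a_1x+a_0$, and two strings are equivalent if their polynomials are $\sim$-equivalent. $\mathrm{Dom}_{p,q}$ is the set of $w\in\Sigma_q^*$ such that no string strictly smaller than $w$ in the length-lexicographic order on $\Sigma_q^*$ is equivalent to $w$, and $\psi_{p,q}:\mathrm{Dom}_{p,q}\to\mathbb{Z}^2$ sends $w$ to the $\sim$-class of the polynomial it represents. *)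

From HB Require Import structures.
From mathcomp Require Import all_boot all_order all_algebra.
Set Implicit Arguments. Unset Strict Implicit. Unset Printing Implicit Defensive.
Import Order.TTheory GRing.Theory Num.Theory.
Local Open Scope ring_scope.

Definition tpoly (p q : int) : {poly int} := 'X^2 + p%:P * 'X - q%:P.

Definition tequiv (p q : int) (f g : {poly int}) : Prop :=
  exists h : {poly int}, f - g = h * tpoly p q.

Definition inSigma (q : int) (w : seq int) : bool := all (fun a => `|a| < `|q|) w.

(* the string a_0 a_1 ... a_n represents a_n x^n + ... + a_1 x + a_0 *)
Definition polyOf (w : seq int) : {poly int} := Poly w.

Fixpoint lex_lt (u v : seq int) : bool :=
  match u, v with
  | a :: u', b :: v' => (a < b) || ((a == b) && lex_lt u' v')
  | _, _ => false
  end.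

Definition llex_lt (u v : seq int) : bool :=
  (size u < size v)%N || ((size u == size v) && lex_lt u v).

Definition Dom (p q : int) (w : seq int) : Prop :=
  inSigma q w /\
  forall u : seq int, inSigma q u -> llex_lt u w -> ~ tequiv p q (polyOf u) (polyOf w).

(* psi_{p,q}(w) = h, with Z^2 identified with Z[x]/<t> via (h1,h2) |-> [h1 x + h2] *)
Definition psi_is (p q : int) (w : seq int) (h : int * int) : Prop :=
  tequiv p q (polyOf w) (h.1%:P * 'X + h.2%:P).

Definition preimage_cyc (p q : int) (zeta : int * int) (w : seq int) : Prop :=
  Dom p q w /\ exists k : int, psi_is p q w (k * zeta.1, k * zeta.2).

Definition regular (q : int) (L : seq int -> Prop) : Prop :=
  exists (S : finType) (s0 : S) (F : pred S) (d : S -> int -> S),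
    forall w : seq int, L w <-> (inSigma q w /\ F (foldl d s0 w)).

From HB Require Import structures.
From mathcomp Require Import all_boot all_order all_algebra.
From mathcomp Require Import zify ring lra.
From Stdlib Require Import Classical ClassicalEpsilon.
Set Implicit Arguments. Unset Strict Implicit. Unset Printing Implicit Defensive.
Import Order.TTheory GRing.Theory Num.Theory.
Local Open Scope ring_scope.

(* Modulo [t], every word [w] has coordinates [coord w] in Z^2, computed by Horner's rule, and
   since [|q| > |p| + 1] every vector is the coordinate vector of some word of [Dom].

   The preimages of nonzero cyclic groups contain arbitrarily long words, so
   pumping [u y^k z] gives [x^n (a zeta) = b zeta] in Z[x]/<t> with [n = |y| > 0] and [a != 0]
   ([u y z] and [u z] are inequivalent because [u y z] is in [Dom]).  For [zeta = m xi] this makes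
   [a m x^n] congruent to a constant, for [zeta = m eta] it makes [a m x^(n+1)] congruent to a
   multiple of [x]; both fail because the [x]-coordinate of [x^(n+1)] is [(-p)^n] modulo [q],
   which is nonzero as [p] and [q] are coprime.

   Multiples.  [w] is in the preimage of <zeta> iff [w] is in [Dom] and
   [coord w = coord u + r zeta] for some [0 <= r < m] and some [u] in the preimage of <m zeta>.
   [Dom] and this relation are recognized by automata that guess a second word letter by letter
   and keep the carry of the digitwise difference, which stays in a bounded box because
   [|q| > |p| + 1]; the subset construction makes them deterministic. *)

Definition vpoly (h : int * int) : {poly int} := h.1%:P * 'X + h.2%:P.

Section Congruence.
Context {p q : int}.

Lemma tequiv_sym f g : tequiv p q f g -> tequiv p q g f.
Proof. by case=> h e; exists (- h); rewrite mulNr -e opprB. Qed.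

Lemma tequiv_trans f g k : tequiv p q f g -> tequiv p q g k -> tequiv p q f k.
Proof. by case=> h1 e1 [h2 e2]; exists (h1 + h2); rewrite mulrDl -e1 -e2; ring. Qed.

Lemma tequivB f1 g1 f2 g2 : tequiv p q f1 g1 -> tequiv p q f2 g2 ->
  tequiv p q (f1 - f2) (g1 - g2).
Proof. by case=> h1 e1 [h2 e2]; exists (h1 - h2); rewrite mulrBl -e1 -e2; ring. Qed.

Lemma tequivMl c f g : tequiv p q f g -> tequiv p q (c * f) (c * g).
Proof. by case=> h e; exists (c * h); rewrite -mulrA -e; ring. Qed.

Lemma size_tpoly : size (tpoly p q) = 3%N.
Proof.
rewrite /tpoly -addrA size_polyDl ?size_polyXn // -polyCN size_MXaddC.
by case: ifP => // _; rewrite ltnS (leq_ltn_trans (size_polyC_leq1 _)).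
Qed.

Lemma lead_coef_tpoly : lead_coef (tpoly p q) = 1.
Proof.
rewrite /tpoly -addrA lead_coefDl ?lead_coefXn // size_polyXn -polyCN size_MXaddC.
by case: ifP => // _; rewrite ltnS (leq_ltn_trans (size_polyC_leq1 _)).
Qed.

Lemma size_vpoly h : (size (vpoly h) <= 2)%N.
Proof. by rewrite /vpoly size_MXaddC; case: ifP => // _; rewrite ltnS size_polyC_leq1. Qed.

Lemma vpolyB a b : vpoly a - vpoly b = vpoly (a.1 - b.1, a.2 - b.2).
Proof. rewrite /vpoly /= !rmorphB /=; ring. Qed.

Lemma vpolyMC c h : c%:P * vpoly h = vpoly (c * h.1, c * h.2).
Proof. rewrite /vpoly /= !rmorphM /=; ring. Qed.

Lemma vpoly_inj : injective vpoly.
Proof.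
move=> [a1 a2] [b1 b2] /(congr1 (fun r : {poly int} => (r`_0, r`_1))).
by rewrite /vpoly !coefD !coefMX !coefC /= !add0r !addr0 => -[-> ->].
Qed.

(* [t] is monic of degree 2, so it divides no nonzero polynomial of degree < 2. *)
Lemma tequiv_vpoly a b : tequiv p q (vpoly a) (vpoly b) -> a = b.
Proof.
case=> h e; apply: vpoly_inj; apply/eqP; rewrite -subr_eq0.
have : h * tpoly p q + (- (vpoly a - vpoly b)) == 0 by rewrite e subrr.
rewrite rreg_div0 ?oppr_eq0 => [/andP[] //||].
- by rewrite lead_coef_tpoly; apply: rreg1.
- by rewrite size_polyN size_tpoly vpolyB (leq_ltn_trans (size_vpoly _)).
Qed.

End Congruence.

Lemma Poly_cat (R : comNzRingType) (u v : seq R) :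
  Poly (u ++ v) = Poly u + 'X^(size u) * Poly v.
Proof.
elim: u => [|a u IH] /=; first by rewrite add0r expr0 mul1r.
by rewrite !cons_poly_def IH exprS; ring.
Qed.

Section Coordinates.
Variables p q : int.

(* Horner's rule: x (c1 x + c2) + a = (c2 - p c1) x + (a + q c1) modulo x^2 + p x - q. *)
Fixpoint coord (w : seq int) : int * int :=
  if w is a :: w' then let c := coord w' in (c.2 - p * c.1, a + q * c.1) else (0, 0).

Lemma tequiv_coord w : tequiv p q (Poly w) (vpoly (coord w)).
Proof.
elim: w => [|a w [h e]] /=; first by exists 0; rewrite /vpoly /= mul0r; ring.
have -> : Poly w = h * tpoly p q + vpoly (coord w) by rewrite -e; ring.
exists ((coord w).1%:P + h * 'X).
rewrite cons_poly_def /vpoly /tpoly /= ?rmorphD ?rmorphB ?rmorphM /=; ring.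
Qed.

Lemma psi_isE w h : psi_is p q w h <-> coord w = h.
Proof.
split=> [e|<-]; last exact: tequiv_coord.
exact: tequiv_vpoly (tequiv_trans (tequiv_sym (tequiv_coord w)) e).
Qed.

Lemma tequiv_PolyE u w : tequiv p q (Poly u) (Poly w) <-> coord u = coord w.
Proof.
split=> [e|e].
  apply: tequiv_vpoly; apply: tequiv_trans (tequiv_sym (tequiv_coord u)) _.
  exact: tequiv_trans e (tequiv_coord w).
by apply: tequiv_trans (tequiv_coord u) _; rewrite e; apply: tequiv_sym (tequiv_coord w).
Qed.

Lemma coord_nseq0 n : coord (nseq n 0) = (0, 0).
Proof. by elim: n => //= n ->; rewrite !mulr0 subrr. Qed.

Lemma coord_cat_nseq0 w n : coord (w ++ nseq n 0) = coord w.
Proof. by elim: w => [|a w /= ->] //=; rewrite coord_nseq0. Qed.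

Definition subw (w u : seq int) : seq int := [seq x.1 - x.2 | x <- zip w u].

Lemma coord_subw w u : size u = size w ->
  coord (subw w u) = ((coord w).1 - (coord u).1, (coord w).2 - (coord u).2).
Proof. by elim: w u => [|a w IH] [|b u] //= [/IH ->]; congr pair => /=; ring. Qed.

Definition xpow (n : nat) : int * int := coord (rcons (nseq n 0) 1).

Lemma tequiv_Xn n : tequiv p q 'X^n (vpoly (xpow n)).
Proof.
have -> : 'X^n = Poly (rcons (nseq n 0) 1) :> {poly int} by rewrite -polyseqXn polyseqK.
exact: tequiv_coord.
Qed.

Lemma xpowS2 n : (xpow n.+1).2 = q * (xpow n).1.
Proof. exact: add0r. Qed.

Lemma xpowS1 n : (xpow n.+1).1 = (xpow n).2 - p * (xpow n).1.
Proof. by []. Qed.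

Lemma xpow1_mod n : exists k, (xpow n.+1).1 = (- p) ^+ n + q * k.
Proof.
elim: n => [|n [k ek]]; first by exists 0; rewrite /xpow /= expr0; ring.
by exists ((xpow n).1 - p * k); rewrite xpowS1 xpowS2 ek exprS; ring.
Qed.

Lemma xpow1_neq0 n : 1 < `|q| -> coprimez p q -> (xpow n.+1).1 != 0.
Proof.
move=> q_gt1 cpq; have [k ->] := xpow1_mod n.
apply: contraTneq q_gt1 => /eqP; rewrite addr_eq0 => /eqP pn.
have : (q %| (- p) ^+ n * 1)%Z by rewrite mulr1 pn rpredN dvdz_mulr.
rewrite Gauss_dvdzr ?dvdz1; last by apply: coprimezXr; rewrite coprimezN coprimez_sym.
by move=> /eqP q1; rewrite -abszE q1.
Qed.

End Coordinates.

Section Representatives.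
Variables p q : int.
Hypothesis hpq : 1 + `|p| < `|q|.

Lemma digit_split h : exists a s : int, [/\ h = a + q * s, `|a| < `|q| & `|q| * `|s| <= `|h|].
Proof.
wlog h_ge0 : h / 0 <= h.
  move=> ih; have [/ih //|h_lt0] := lerP 0 h.
  have [a [s [eh ha hs]]] := ih (- h) ltac:(lia).
  by exists (- a), (- s); split; lia.
have q_neq0 : `|q| != 0 by lia.
have := divz_eq h `|q|; have := modz_ge0 h q_neq0; have := ltz_mod h q_neq0.
have : 0 <= (h %/ `|q|)%Z by rewrite divz_ge0 //; lia.
set s := (h %/ `|q|)%Z; set a := (h %% `|q|)%Z; rewrite normr_id => s_ge0 a_lt a_ge0 eh.
by have [q_ge0|q_lt0] := lerP 0 q; [exists a, s | exists a, (- s)]; split; nia.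
Qed.

Definition weight (e : int * int) : int := 2 * `|e.2| + (`|q| - `|p| + 1) * `|e.1|.

Lemma weight_digit_split h1 h2 a s : (h1, h2) != (0, 0) -> h2 = a + q * s ->
  `|q| * `|s| <= `|h2| -> weight (s, h1 + s * p) < weight (h1, h2).
Proof.
rewrite /weight /= xpair_eqE negb_and => nz eh hs.
have t1 : `|h1 + s * p| <= `|h1| + `|s| * `|p| by rewrite -normrM ler_normD.
have f3 : 3 * `|h1| <= (`|q| - `|p| + 1) * `|h1| by apply: ler_wpM2r => //; lia.
have [s0|s0] := eqVneq s 0.
  move: t1 hs; rewrite s0 normr0 mul0r addr0 mulr0; lia.
have f4 : `|p| * `|s| <= `|q| * `|s| - 2 * `|s| by rewrite -mulrBl ler_wpM2r //; lia.
have : 1 <= `|s| by lia.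
lia.
Qed.

Lemma coord_surj e : exists2 w, inSigma q w & coord p q w = e.
Proof.
suff ih n : forall e, weight e <= n%:Z -> exists2 w, inSigma q w & coord p q w = e.
  by apply: (ih (absz (weight e))); rewrite /weight; lia.
elim: n => [|n IH] [h1 h2] le_n.
  by exists [::] => //; rewrite /=; congr pair; move: le_n; rewrite /weight /=; nia.
have [->|nz] := eqVneq (h1, h2) (0, 0); first by exists [::].
have [a [s [eh ha hs]]] := digit_split h2.
have /IH [w sw cw] : weight (s, h1 + s * p) <= n.
  rewrite -ltzD1; apply: lt_le_trans (weight_digit_split nz eh hs) _.
  by rewrite -addn1 PoszD in le_n.
exists (a :: w); first by rewrite /inSigma /= ha.
by rewrite /= cw /= eh; congr pair; ring.
Qed.

Definition base : int := 2 * `|q| - 1.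

Fixpoint lexval (w : seq int) : int :=
  if w is a :: w' then (a + `|q| - 1) * base ^+ size w' + lexval w' else 0.

Lemma lexval_bound w : inSigma q w -> 0 <= lexval w < base ^+ size w.
Proof.
elim: w => [|a w IH] /=; first by rewrite expr0.
rewrite /inSigma /= => /andP[ha /IH]; rewrite exprS /base.
by move: (base ^+ size w) => X; rewrite /base; nia.
Qed.

Lemma lexval_lex u w : inSigma q u -> inSigma q w -> size u = size w ->
  lex_lt u w -> lexval u < lexval w.
Proof.
elim: u w => [|a u IH] [|b w] //=; rewrite /inSigma /= => /andP[ha su] /andP[hb sw] [es] lt_uw.
have := lexval_bound su; have := lexval_bound sw; rewrite es.
case/orP: lt_uw => [ab|/andP[/eqP -> /(IH w su sw es)]]; last by lia.
move: (base ^+ size w) => X b1 b2.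
have : 0 <= (b - a - 1) * X by apply: mulr_ge0; lia.
lia.
Qed.

Definition llex_rank (w : seq int) : int := base ^+ size w + lexval w.

Lemma llex_rank_lt u w : inSigma q u -> inSigma q w -> llex_lt u w ->
  llex_rank u < llex_rank w.
Proof.
move=> su sw; rewrite /llex_lt => /orP[lt_size|/andP[/eqP es lt]]; last first.
  by rewrite /llex_rank es ltrD2l lexval_lex.
have := lexval_bound su; have := lexval_bound sw; rewrite /llex_rank.
have : base ^+ (size u).+1 <= base ^+ size w by apply: ler_weXn2l => //; rewrite /base; lia.
rewrite exprS; move: (base ^+ size u) (base ^+ size w) => X Y; rewrite /base; nia.
Qed.

Lemma llex_rank_ge0 w : inSigma q w -> 0 <= llex_rank w.
Proof.
move/lexval_bound=> /andP[lexval_ge0 _].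
by rewrite addr_ge0 // exprn_ge0 // /base; lia.
Qed.

Lemma Dom_exists w : inSigma q w -> exists2 w', Dom p q w' & coord p q w' = coord p q w.
Proof.
suff ih n : forall w, (absz (llex_rank w) < n)%N -> inSigma q w ->
    exists2 w', Dom p q w' & coord p q w' = coord p q w.
  by apply: ih; apply: ltnSn.
elim: n => [//|n IH] {}w rank_w sw.
have [Dw|nDw] := classic (Dom p q w); first by exists w.
have [u [su lt_uw eq_uw]] : exists u,
    [/\ inSigma q u, llex_lt u w & tequiv p q (polyOf u) (polyOf w)].
  apply: NNPP => none; apply: nDw; split => // u su lt_uw eq_uw.
  by apply: none; exists u.
have := llex_rank_lt su sw lt_uw; have := llex_rank_ge0 su => rank_ge0 lt_rank.
have [w' Dw' cw'] := IH u ltac:(lia) su.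
by exists w'; rewrite // cw'; apply/(tequiv_PolyE p q).
Qed.

Lemma Dom_coord_surj e : exists2 w, Dom p q w & coord p q w = e.
Proof.
have [w sw <-] := coord_surj e.
exact: Dom_exists.
Qed.

End Representatives.

Lemma inSigma_cat q u v : inSigma q (u ++ v) = inSigma q u && inSigma q v.
Proof. exact: all_cat. Qed.

Lemma inSigma_nseq0 q n : 1 < `|q| -> inSigma q (nseq n 0).
Proof. by move=> q_gt1; apply/allP => x /nseqP[-> _]; rewrite normr0; lia. Qed.

Lemma regular_pumping q L : regular q L ->
  exists N : nat, forall w, L w -> (N <= size w)%N ->
  exists u y z, (0 < size y)%N /\ forall k, L (u ++ flatten (nseq k y) ++ z).
Proof.
case=> S [s0 [F [d HL]]]; exists #|S| => w Lw le_S_w.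
pose f (i : 'I_#|S|.+1) := foldl d s0 (take i w).
have [i [j [fij lt_ij]]] : exists i j, f i = f j /\ (i < j)%N.
  have /injectivePn[i [j nij fij]] : ~~ injectiveb f.
    by apply: contraT => /negbNE/injectiveP/leq_card; rewrite card_ord ltnn.
  by case: (ltngtP i j) nij fij => [lt|lt|/val_inj->]; [exists i, j|exists j, i|rewrite eqxx].
have le_jw : (j <= size w)%N by apply: leq_trans le_S_w; rewrite -ltnS.
pose u := take i w; pose y := take (j - i) (drop i w); pose z := drop j w.
have take_j : take j w = u ++ y by rewrite /u /y -takeD subnKC // ltnW.
have ew : w = u ++ y ++ z by rewrite catA -take_j cat_take_drop.
have loop_y : foldl d (foldl d s0 u) y = foldl d s0 u by rewrite -foldl_cat -take_j.
have [/[!ew] /[!inSigma_cat] /and3P[su sy sz] Fw] := proj1 (HL w) Lw.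
have loop k : inSigma q (flatten (nseq k y)) /\
    foldl d (foldl d s0 u) (flatten (nseq k y)) = foldl d s0 u.
  by elim: k => //= k [IHs IHf]; rewrite inSigma_cat sy IHs foldl_cat loop_y.
exists u, y, z; split=> [|k].
  by rewrite /y size_take size_drop; case: ifP => _; lia.
have [sk fk] := loop k; apply/HL; rewrite !inSigma_cat su sk sz; split => //.
by move: Fw; rewrite !foldl_cat loop_y fk.
Qed.

Section NotRegular.
Variables p q : int.
Hypothesis hpq : 1 + `|p| < `|q|.
Hypothesis hgcd : gcdz p q = 1.

Definition coord_bound : int := `|q| + `|p| + 1.

Lemma coord_lt w : inSigma q w ->
  `|(coord p q w).1| < coord_bound ^+ size w /\ `|(coord p q w).2| < coord_bound ^+ size w.
Proof.
elim: w => [|a w IH] /=; first by rewrite expr0 !normr0.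
rewrite /inSigma /= => /andP[ha /IH]; case: (coord p q w) => c1 c2 /=.
have : 1 <= coord_bound ^+ size w by apply: exprn_ege1; rewrite /coord_bound; lia.
rewrite exprS; move: (coord_bound ^+ size w) => X X1 [b1 b2].
have f1 : `|p| * `|c1| <= `|p| * (X - 1) by apply: ler_wpM2l => //; lia.
have f2 : `|q| * `|c1| <= `|q| * (X - 1) by apply: ler_wpM2l => //; lia.
have t1 : `|c2 - p * c1| <= `|c2| + `|p| * `|c1| by rewrite -normrM; apply: ler_normB.
have t2 : `|a + q * c1| <= `|a| + `|q| * `|c1| by rewrite -normrM; apply: ler_normD.
by rewrite /coord_bound; split; [clear t2 f2 | clear t1 f1]; lia.
Qed.

(* A word of length [< N] has coordinates [< coord_bound ^ N], so it cannot represent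
   [coord_bound ^ N * zeta]. *)
Lemma preimage_long z1 z2 : (z1, z2) != (0, 0) ->
  forall N : nat, exists2 w, preimage_cyc p q (z1, z2) w & (N <= size w)%N.
Proof.
move=> nz N; set k := coord_bound ^+ N.
have [w Dw cw] := Dom_coord_surj hpq (k * z1, k * z2).
exists w; first by split=> //; exists k; apply/psi_isE.
rewrite leqNgt; apply/negP => lt_wN.
have k_ge1 : 1 <= k by apply: exprn_ege1; rewrite /coord_bound; lia.
have : coord_bound ^+ size w <= k by apply: ler_weXn2l; [rewrite /coord_bound; lia|exact: ltnW].
case: Dw => /coord_lt; rewrite cw /= !normrM (ger0_norm (le_trans ler01 k_ge1)) => -[b1 b2] _.
move: nz b1 b2; rewrite xpair_eqE negb_and; move: (coord_bound ^+ size w) => X.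
by case/orP=> nz b1 b2 Xk; [have : 1 <= `|z1| by lia | have : 1 <= `|z2| by lia]; nia.
Qed.

Lemma preimage_pump zeta u y z : (0 < size y)%N ->
  (forall k, preimage_cyc p q zeta (u ++ flatten (nseq k y) ++ z)) ->
  exists d1 d2 : int, d1 != 0 /\
    tequiv p q ('X^(size y) * vpoly (d1 * zeta.1, d1 * zeta.2)) (vpoly (d2 * zeta.1, d2 * zeta.2)).
Proof.
move=> y_gt0 Lk.
have [D0 [k0 /(psi_isE p q) e0]] := Lk 0%N.
have [D1 [k1 /(psi_isE p q) e1]] := Lk 1%N.
have [_ [k2 /(psi_isE p q) e2]] := Lk 2%N.
rewrite /= cats0 in D0 e0 D1 e1 e2 *; rewrite -catA in e2.
exists (k1 - k0), (k2 - k1); split.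
  apply: contraPneq D1 => /eqP; rewrite subr_eq0 => /eqP k10 [_ minimal].
  apply: (minimal (u ++ z)); first by case: D0.
    by rewrite /llex_lt !size_cat; apply/orP; left; lia.
  by apply/(tequiv_PolyE p q); rewrite e0 e1 k10.
have vpolyBM (k k' : int) : vpoly ((k - k') * zeta.1, (k - k') * zeta.2) =
    vpoly (k * zeta.1, k * zeta.2) - vpoly (k' * zeta.1, k' * zeta.2).
  by rewrite vpolyB /=; congr vpoly; congr pair; ring.
rewrite !vpolyBM -e0 -e1 -e2.
apply: tequiv_trans (tequivMl _ (tequivB (tequiv_sym (tequiv_coord p q _))
  (tequiv_sym (tequiv_coord p q _)))) _.
rewrite (_ : _ * _ = Poly (u ++ y ++ y ++ z) - Poly (u ++ y ++ z)); last by rewrite !Poly_cat; ring.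
exact: tequivB (tequiv_coord p q _) (tequiv_coord p q _).
Qed.

Lemma vpolyC0 c : vpoly (c, 0) = c%:P * 'X.
Proof. by rewrite /vpoly addr0. Qed.

Lemma vpoly0C c : vpoly (0, c) = c%:P.
Proof. by rewrite /vpoly mul0r add0r. Qed.

Let q_gt1 : 1 < `|q|. Proof. lia. Qed.
Let coprime_pq : coprimez p q. Proof. exact/eqP. Qed.

Lemma not_tequiv_CXn_const (c e : int) n : c != 0 -> ~ tequiv p q (c%:P * 'X^(n.+1)) (vpoly (0, e)).
Proof.
move=> c_neq0 /(tequiv_trans (tequiv_sym (tequivMl c%:P (tequiv_Xn p q n.+1)))).
rewrite vpolyMC => /tequiv_vpoly[] /eqP.
by rewrite mulf_eq0 (negbTE c_neq0) (negbTE (xpow1_neq0 n q_gt1 coprime_pq)).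
Qed.

Lemma not_tequiv_CXn_lin (c e : int) n : c != 0 -> ~ tequiv p q (c%:P * 'X^(n.+2)) (vpoly (e, 0)).
Proof.
move=> c_neq0 /(tequiv_trans (tequiv_sym (tequivMl c%:P (tequiv_Xn p q n.+2)))).
rewrite vpolyMC xpowS2 => /tequiv_vpoly[] _ /eqP.
rewrite !mulf_eq0 (negbTE c_neq0) (negbTE (xpow1_neq0 n q_gt1 coprime_pq)) orbF.
by apply/negP; rewrite -normr_eq0; lia.
Qed.

Lemma preimage_xi_not_regular (m : int) : m != 0 -> ~ regular q (preimage_cyc p q (0, m)).
Proof.
move=> m_neq0 /regular_pumping[N pump].
have [|w Lw le_Nw] := @preimage_long 0 m _ N; first by rewrite xpair_eqE (negbTE m_neq0) andbF.
have [u [y [z [y_gt0 Lk]]]] := pump w Lw le_Nw.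
have [d1 [d2 [d1_neq0]]] := preimage_pump y_gt0 Lk.
case: (size y) y_gt0 => // n _; rewrite /= !mulr0 vpoly0C mulrC.
by apply: not_tequiv_CXn_const; rewrite mulf_neq0.
Qed.

Lemma preimage_eta_not_regular (m : int) : m != 0 -> ~ regular q (preimage_cyc p q (m, 0)).
Proof.
move=> m_neq0 /regular_pumping[N pump].
have [|w Lw le_Nw] := @preimage_long m 0 _ N; first by rewrite xpair_eqE (negbTE m_neq0).
have [u [y [z [y_gt0 Lk]]]] := pump w Lw le_Nw.
have [d1 [d2 [d1_neq0]]] := preimage_pump y_gt0 Lk.
case: (size y) y_gt0 => // n _; rewrite /= !mulr0 vpolyC0 mulrCA -exprSr.
by apply: not_tequiv_CXn_lin; rewrite mulf_neq0.
Qed.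

End NotRegular.

Definition recognizable (P : seq int -> Prop) : Prop :=
  exists (S : finType) (s0 : S) (d : S -> int -> S) (F : pred S),
    forall w, F (foldl d s0 w) <-> P w.

Lemma regular_recognizable q (L P1 P2 : seq int -> Prop) :
  recognizable P1 -> recognizable P2 -> (forall w, L w <-> inSigma q w /\ ~ P1 w /\ P2 w) ->
  regular q L.
Proof.
move=> [S1 [s1 [d1 [F1 H1]]]] [S2 [s2 [d2 [F2 H2]]]] HL.
pose d (x : S1 * S2) a := (d1 x.1 a, d2 x.2 a).
exists (S1 * S2)%type, (s1, s2), (fun x => ~~ F1 x.1 && F2 x.2), d => w.
have -> : foldl d (s1, s2) w = (foldl d1 s1 w, foldl d2 s2 w).
  by elim: w (s1) (s2) => //= a w IH x1 x2; rewrite IH.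
rewrite HL /= -H1 -H2; split=> [[sw [nF1 F2w]]|[sw /andP[nF1 F2w]]]; split=> //.
  by rewrite F2w andbT; apply/negP.
by split=> //; apply/negP.
Qed.

Definition asbool (P : Prop) : bool := if excluded_middle_informative P then true else false.

Lemma asboolP P : reflect P (asbool P).
Proof. by rewrite /asbool; case: excluded_middle_informative => h; constructor. Qed.

Section GuessingAutomaton.
Variable q : int.
Variables (T : finType) (init : T -> Prop) (step : T -> int -> int -> T -> Prop) (acc : T -> Prop).

Fixpoint run (s : T) (w u : seq int) (s' : T) : Prop :=
  match w, u with
  | [::], [::] => s = s'
  | a :: w', b :: u' => exists s1, step s a b s1 /\ run s1 w' u' s'
  | _, _ => False
  end.

Definition guess_lang (w : seq int) : Prop :=
  exists s0 u s, [/\ init s0, inSigma q u, run s0 w u s & acc s].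

Definition subset_step (X : {set T}) (a : int) : {set T} :=
  [set s' | asbool (exists2 s, s \in X & exists2 b, `|b| < `|q| & step s a b s')].

Lemma subset_stepsP w X s' : s' \in foldl subset_step X w <->
  exists s u, [/\ s \in X, inSigma q u & run s w u s'].
Proof.
elim: w X => [|a w IH] X /=.
  split=> [sX|[s [[|b u] [sX _]]]] //=; first by exists s', [::].
  by move=> <-.
rewrite IH; split=> [[s1 [u [/[!inE] /asboolP[s sX [b hb st]] su r]]]|].
  exists s, (b :: u); split=> //; last by exists s1.
  by rewrite /inSigma /= hb.
case=> s [[|b u] [sX su r]]; first by case: r.
case: r su => s1 [st r]; rewrite /inSigma /= => /andP[hb su].
by exists s1, u; split=> //; rewrite inE; apply/asboolP; exists s => //; exists b.
Qed.

Lemma guess_lang_recognizable : recognizable guess_lang.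
Proof.
exists {set T}, [set s | asbool (init s)], subset_step.
exists (fun X : {set T} => asbool (exists2 s, s \in X & acc s)) => w.
split=> [/asboolP[s /subset_stepsP[s0 [u [/[!inE] /asboolP i0 su r]]] ac]|].
  by exists s0, u, s.
case=> s0 [u [s [i0 su r ac]]]; apply/asboolP; exists s => //.
by apply/subset_stepsP; exists s0, u; rewrite inE; split=> //; apply/asboolP.
Qed.

Lemma Run_cat s w1 u1 s1 w2 u2 s2 : run s w1 u1 s1 -> run s1 w2 u2 s2 ->
  run s (w1 ++ w2) (u1 ++ u2) s2.
Proof.
elim: w1 u1 s => [|a w IH] [|b u] s //= => [-> //|[s3 [st r]] r2].
by exists s3; split=> //; apply: IH r r2.
Qed.

Lemma Run_split s w1 u1 w2 u2 s2 : size u1 = size w1 ->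
  run s (w1 ++ w2) (u1 ++ u2) s2 -> exists s1, run s w1 u1 s1 /\ run s1 w2 u2 s2.
Proof.
elim: w1 u1 s => [|a w IH] [|b u] s //= => [_ r|[su] [s3 [st /(IH _ _ su)[s1 [r1 r2]]]]].
  by exists s.
by exists s1; split=> //; exists s3.
Qed.

End GuessingAutomaton.

Section Carries.
Variables p q : int.

(* A carry [c] records that the unread suffix of a digit word must have coordinates [-c]. *)
Definition carry_next (c : int * int) (d : int) (c' : int * int) : Prop :=
  c'.2 - p * c'.1 = c.1 /\ q * c'.1 = c.2 + d.

Fixpoint carries (c : int * int) (ds : seq int) (c' : int * int) : Prop :=
  if ds is d :: ds' then exists2 c1, carry_next c d c1 & carries c1 ds' c' else c = c'.

Lemma carries0E c ds : carries c ds (0, 0) <->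
  c.1 + (coord p q ds).1 = 0 /\ c.2 + (coord p q ds).2 = 0.
Proof.
elim: ds c => [|d ds IH] [c1 c2] /=.
  by split=> [[-> ->]|]; rewrite ?addr0 // => -[-> ->].
split=> [[[e1 e2] [n1 n2] /IH /= [h1 h2]]|[h1 h2]]; first by move: n1 n2 => /=; lia.
by exists (- (coord p q ds).1, - (coord p q ds).2); [split=> /=; lia | apply/IH => /=; lia].
Qed.

Variable M : int.

Definition in_box (c : int * int) : Prop := `|c.1| <= M + 2 /\ `|c.2| <= `|q| * M.

Lemma carry_next_box c d c' : 1 + `|p| < `|q| -> `|p| + 2 <= M ->
  in_box c -> `|d| <= 2 * `|q| - 2 -> carry_next c d c' -> in_box c'.
Proof.
case: c c' => c1 c2 [s e] hpq hM [/= b1 b2] hd [/= n1 n2].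
have hqs : `|q| * `|s| <= `|q| * M + 2 * `|q| - 2.
  by rewrite -normrM n2; have := ler_normD c2 d; lia.
have hs : `|s| <= M + 1.
  rewrite leNgt; apply/negP => h.
  have : `|q| * (M + 2) <= `|q| * `|s| by apply: ler_wpM2l => //; lia.
  lia.
have t1 : `|e| <= `|c1| + `|p| * `|s| by rewrite (_ : e = c1 + p * s) -?normrM ?ler_normD //; lia.
have f1 : `|p| * `|s| <= `|p| * (M + 1) by apply: ler_wpM2l.
have f2 : (`|p| + 2) * M <= `|q| * M by apply: ler_wpM2r; lia.
split=> /=; lia.
Qed.

Definition box_rad1 : nat := absz (M + 2).
Definition box_rad2 : nat := absz (`|q| * M).
Definition box : finType := ('I_box_rad1.*2.+1 * 'I_box_rad2.*2.+1)%type.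
Definition box_val (t : box) : int * int :=
  ((t.1 : nat)%:Z - box_rad1%:Z, (t.2 : nat)%:Z - box_rad2%:Z).

Lemma box_val_inj : injective box_val.
Proof.
case=> [[i hi] [j hj]] [[i' hi'] [j' hj']]; rewrite /box_val /= => -[e1 e2].
by congr pair; apply: val_inj => /=; lia.
Qed.

Hypothesis M_ge0 : 0 <= M.

Lemma box_rad1E : box_rad1%:Z = M + 2. Proof. rewrite /box_rad1; lia. Qed.
Lemma box_rad2E : box_rad2%:Z = `|q| * M.
Proof. by rewrite /box_rad2 gez0_abs // mulr_ge0. Qed.

Lemma box_valP t : in_box (box_val t).
Proof.
by case: t => [[i hi] [j hj]]; rewrite /in_box /box_val /= -box_rad1E -box_rad2E; split; lia.
Qed.

Lemma box_val_surj c : in_box c -> exists t, box_val t = c.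
Proof.
case: c => c1 c2 [/= b1 b2]; rewrite -box_rad1E in b1; rewrite -box_rad2E in b2.
have h1 : (absz (c1 + box_rad1%:Z)%R < box_rad1.*2.+1)%N by lia.
have h2 : (absz (c2 + box_rad2%:Z)%R < box_rad2.*2.+1)%N by lia.
by exists (Ordinal h1, Ordinal h2); rewrite /box_val /=; congr pair; lia.
Qed.

Lemma box_val00 : exists t, box_val t = (0, 0).
Proof. by apply: box_val_surj; rewrite /in_box /= !normr0; split; [lia | rewrite mulr_ge0]. Qed.

Section CarryProduct.
Hypotheses (hpq : 1 + `|p| < `|q|) (hM : `|p| + 2 <= M).
Variables (X : finType) (g : X -> int -> int -> X).

Definition carry_step (s : box * X) (a b : int) (s' : box * X) : Prop :=
  carry_next (box_val s.1) (a - b) (box_val s'.1) /\ s'.2 = g s.2 a b.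

Fixpoint gfold (x : X) (w u : seq int) : X :=
  if (w, u) is (a :: w', b :: u') then gfold (g x a b) w' u' else x.

Lemma carry_RunE s w u s' : inSigma q w -> inSigma q u ->
  run carry_step s w u s' <->
  [/\ size u = size w, carries (box_val s.1) (subw w u) (box_val s'.1) & s'.2 = gfold s.2 w u].
Proof.
elim: w u s => [|a w IH] [|b u] s //=; try by split=> [|[]].
  by split=> [<-|[_ /box_val_inj]]; case: s s' => [t x] [t' x'] //= -> ->.
rewrite /inSigma /= => /andP[ha sw] /andP[hb su]; split.
  case=> s1 [[n1 e1] /(IH _ _ sw su)[sz cr e2]].
  by split; [rewrite sz | exists (box_val s1.1) | rewrite e2 e1].
case=> [[sz] [c1 n1 cr] e2].
have /box_val_surj[t1 et1] : in_box c1.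
  by apply: carry_next_box n1 => //; [exact: box_valP | lia].
exists (t1, g s.2 a b); split; first by rewrite /carry_step /= et1.
by apply/(IH _ _ sw su); rewrite /= et1.
Qed.

End CarryProduct.
End Carries.

Lemma gfold_foldl (X : finType) (h : X -> int -> X) x w u : size u = size w ->
  gfold (fun x (a b : int) => h x b) x w u = foldl h x u.
Proof. by elim: w u x => [|a w IH] [|b u] x //= [/IH ->]. Qed.

Definition lex_step (l : bool * bool) (a b : int) : bool * bool :=
  if l.1 then l else
  if b < a then (true, true) else if a < b then (true, false) else (false, false).

(* Side state: the lexicographic comparison of the guessed word with the read one so far,
   and whether the last guessed letter is [0]. *)
Definition dom_side (x : bool * bool * bool) (a b : int) : bool * bool * bool :=
  (lex_step x.1 a b, b == 0).

Lemma gfold_dom_decided y z w u : (gfold dom_side ((true, y), z) w u).1 = (true, y).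
Proof. by elim: w u z => [|a w IH] [|b u] z //=; rewrite /dom_side /lex_step /= IH. Qed.

Lemma gfold_dom_lex z w u : size u = size w ->
  ((gfold dom_side ((false, false), z) w u).1 == (true, true)) = lex_lt u w.
Proof.
elim: w u z => [|a w IH] [|b u] z //= [sz]; rewrite /dom_side /lex_step /=.
have [ba|ab] := ltrP b a; first by rewrite gfold_dom_decided.
have [lt_ab|le_ba] := ltrP a b; first by rewrite gfold_dom_decided (gt_eqF lt_ab).
have -> : b == a by rewrite eq_le ab le_ba.
exact: IH.
Qed.

Lemma gfold_dom_last0 l z w u : size u = size w ->
  (gfold dom_side (l, z) w u).2 = if u is [::] then z else last 0 u == 0.
Proof. by elim: w u l z => [|a w IH] [|b u] l z //= [sz]; rewrite IH //; case: u sz. Qed.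

Section DomAutomaton.
Variables p q : int.
Hypothesis hpq : 1 + `|p| < `|q|.

Let M : int := `|p| + 2.
Let hM : `|p| + 2 <= M. Proof. by []. Qed.
Let M_ge0 : 0 <= M. Proof. rewrite /M; lia. Qed.

Definition dom_state : finType := (box q M * (bool * bool * bool))%type.
Definition dom_init (s : dom_state) : Prop :=
  box_val s.1 = (0, 0) /\ s.2 = ((false, false), false).
Definition dom_acc (s : dom_state) : Prop :=
  box_val s.1 = (0, 0) /\ (s.2.1 = (true, true) \/ s.2.2).
Definition dom_step := @carry_step p q M _ dom_side.

(* Shorter equivalent words are covered by the second case, after padding them with zeros. *)
Definition dom_witness (w : seq int) : Prop := exists u,
  [/\ size u = size w, inSigma q u, coord p q u = coord p q w &
      lex_lt u w \/ exists v, u = rcons v 0].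

Lemma DomE w : inSigma q w -> Dom p q w <-> ~ dom_witness w.
Proof.
move=> sw; split=> [[_ minimal] [u [sz su cu [lt_uw|[v ev]]]]|nwit].
- apply: (minimal u su); first by rewrite /llex_lt sz eqxx lt_uw orbT.
  exact/(tequiv_PolyE p q).
- have sv : inSigma q v by move: su; rewrite ev -cats1 inSigma_cat => /andP[].
  apply: (minimal v sv); first by rewrite /llex_lt -sz ev size_rcons leqnn.
  by apply/(tequiv_PolyE p q); rewrite -cu ev -cats1 (coord_cat_nseq0 _ _ _ 1).
split=> // u su; rewrite /llex_lt => /orP[lt_size|/andP[/eqP sz lt_uw]] eq_uw; apply: nwit.
  pose n := (size w - size u).-1.
  exists (u ++ nseq n.+1 0); split.
  - by rewrite size_cat size_nseq /n; lia.
  - by rewrite inSigma_cat su inSigma_nseq0 //; lia.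
  - by rewrite coord_cat_nseq0; apply/(tequiv_PolyE p q).
  - by right; exists (u ++ nseq n 0); rewrite -cats1 -catA -addn1 nseqD.
by exists u; split=> //; [apply/(tequiv_PolyE p q) | left].
Qed.

Lemma dom_witness_guess w : inSigma q w ->
  guess_lang q dom_init dom_step dom_acc w <-> dom_witness w.
Proof.
move=> sw; split=> [[s0 [u [s [[i1 i2] su r [a1 a2]]]]]|].
  have [sz cr e] := (carry_RunE M_ge0 hpq hM dom_side s0 s sw su).1 r.
  exists u; split=> //.
    move: cr; rewrite i1 a1 => /carries0E; rewrite coord_subw // !add0r.
    by case: (coord p q u) (coord p q w) => [? ?] [? ?] /= [? ?]; congr pair; lia.
  rewrite e i2 in a2; case: a2 => [lex|].
    by left; rewrite -(gfold_dom_lex false sz) lex.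
  rewrite gfold_dom_last0 //; case/lastP: u {su sz e cr r} => [//|v x].
  have -> : (if rcons v x is [::] then false else last 0 (rcons v x) == 0) = (x == 0).
    by case: v => [|y v] //=; rewrite last_rcons.
  by move=> /eqP ->; right; exists v.
case=> u [sz su cu hlex].
have [t0 dt0] := box_val00 q M_ge0; have [t1 dt1] := box_val00 q M_ge0.
exists (t0, ((false, false), false)), u, (t1, gfold dom_side ((false, false), false) w u).
split=> //.
  apply/(carry_RunE M_ge0 hpq hM dom_side _ _ sw su); split=> //=.
  by rewrite dt0 dt1; apply/carries0E; rewrite coord_subw // cu /=; lia.
split=> //=; case: hlex => [lt_uw|[v ev]]; first by left; apply/eqP; rewrite gfold_dom_lex.
by right; rewrite gfold_dom_last0 // ev; case: v {ev} => [|x v] //=; rewrite ?last_rcons.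
Qed.

End DomAutomaton.

Section TrailingZeros.
Variables (S : finType) (d : S -> int -> S) (F : pred S).

Definition zeros_step (x : S * bool) (b : int) : S * bool :=
  (d x.1 b, (x.2 && (b == 0)) || F (d x.1 b)).

Lemma zeros_stepsP u s f : (foldl zeros_step (s, f) u).2 <->
  exists v n, u = v ++ nseq n 0 /\ if v is [::] then f else F (foldl d s v).
Proof.
elim: u s f => [|b u IH] s f /=.
  split=> [fs|[v [n [/esym/nilP]]]]; first by exists [::], 0%N.
  by rewrite cat_nilp => /andP[/nilP -> _].
rewrite IH; split=> [[v [n [eu hv]]]|[v [n [eu hv]]]].
  case: v eu hv => [|c v] /= eu hv.
    case/orP: hv => [/andP[hf /eqP b0]|Fb]; first by exists [::], n.+1; rewrite eu b0.
    by exists [:: b], n; rewrite eu.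
  by exists [:: b, c & v], n; rewrite eu.
case: v eu hv => [|c v] /= eu hv.
  case: n eu => // n [b0 eu]; exists [::], n; split=> //.
  by rewrite hv b0 eqxx.
case: eu => cb eu; subst c; exists v, n; split=> //.
by case: v {eu} hv => [|c v] //= ->; rewrite orbT.
Qed.

Lemma zeros_steps_startP u s : (foldl zeros_step (s, F s) u).2 <->
  exists v n, u = v ++ nseq n 0 /\ F (foldl d s v).
Proof.
by rewrite zeros_stepsP; split=> -[v [n [e h]]]; exists v, n; split=> //; case: v e h.
Qed.

End TrailingZeros.

Section Multiple.
Variables p q : int.
Hypothesis hpq : 1 + `|p| < `|q|.
Variables (z1 z2 m : int).
Hypothesis m_gt0 : 0 < m.
Variables (S : finType) (s0 : S) (F : pred S) (d : S -> int -> S).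
Hypothesis HK : forall w,
  preimage_cyc p q (m * z1, m * z2) w <-> inSigma q w /\ F (foldl d s0 w).

Let M : int := `|p| + 2 + m * (`|z1| + `|z2|).
Let hM : `|p| + 2 <= M.
Proof.
have := mulr_ge0 (ltW m_gt0) (addr_ge0 (normr_ge0 z1) (normr_ge0 z2)).
rewrite /M; lia.
Qed.
Let q_gt1 : 1 < `|q|. Proof. lia. Qed.
Let M_ge0 : 0 <= M. Proof. by apply: le_trans _ hM; lia. Qed.

Definition coset_state : finType := (box q M * (S * bool))%type.
Definition coset_step := @carry_step p q M _ (fun x (a b : int) => zeros_step d F x b).

(* The carry starts at [-r zeta], so it ends at [0] iff [coord w - coord u = r zeta]. *)
Definition coset_init (s : coset_state) : Prop :=
  (exists2 r, 0 <= r < m & box_val s.1 = (- (r * z1), - (r * z2))) /\ s.2 = (s0, F s0).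

(* The guessed word may be longer than the read one; its tail is matched against zeros. *)
Definition coset_acc (s : coset_state) : Prop := exists n u s',
  [/\ inSigma q u, run coset_step s (nseq n 0) u s', box_val s'.1 = (0, 0) & s'.2.2].

Definition coset_witness (w : seq int) : Prop :=
  exists2 r, 0 <= r < m & exists2 u, preimage_cyc p q (m * z1, m * z2) u &
    coord p q w = ((coord p q u).1 + r * z1, (coord p q u).2 + r * z2).

Lemma coset_guess_witness w : inSigma q w ->
  guess_lang q coset_init coset_step coset_acc w -> coset_witness w.
Proof.
move=> sw [t0 [u1 [t [[[r hr dr] i2] su1 r1 [n [u2 [t' [su2 r2 a1 a2]]]]]]]].
have su12 : inSigma q (u1 ++ u2) by rewrite inSigma_cat su1 su2.
have sw0 : inSigma q (w ++ nseq n 0) by rewrite inSigma_cat sw inSigma_nseq0.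
have [sz cr e] := (carry_RunE M_ge0 hpq hM _ t0 t' sw0 su12).1 (Run_cat r1 r2).
move: cr; rewrite dr a1 => /carries0E; rewrite coord_subw // coord_cat_nseq0 /= => -[h1 h2].
move: a2; rewrite e i2 gfold_foldl // => /zeros_steps_startP[v [k [ev Fv]]].
have sv : inSigma q v by move: su12; rewrite ev inSigma_cat => /andP[].
exists r => //; exists v; first exact/HK.
move: h1 h2; rewrite ev coord_cat_nseq0.
by case: (coord p q w) => ? ? /= ? ?; congr pair; lia.
Qed.

Lemma coset_witness_guess w : inSigma q w ->
  coset_witness w -> guess_lang q coset_init coset_step coset_acc w.
Proof.
move=> sw [r hr [u Ku cw]]; have su : inSigma q u by case: Ku => -[].
pose w' := w ++ nseq (size u - size w) 0; pose u' := u ++ nseq (size w - size u) 0.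
have sw' : inSigma q w' by rewrite inSigma_cat sw inSigma_nseq0.
have su' : inSigma q u' by rewrite inSigma_cat su inSigma_nseq0.
have sz : size u' = size w' by rewrite !size_cat !size_nseq; lia.
have /(box_val_surj M_ge0)[t0 dt0] : in_box q M (- (r * z1), - (r * z2)).
  have f1 : r * `|z1| <= m * `|z1| by apply: ler_wpM2r; lia.
  have f2 : r * `|z2| <= m * `|z2| by apply: ler_wpM2r; lia.
  have f3 : M <= `|q| * M by rewrite ler_peMl; lia.
  by rewrite /in_box /= !normrN !normrM (ger0_norm (proj1 (andP hr))) /M; lia.
have [t1 dt1] := box_val00 q M_ge0.
pose sfin := (t1, foldl (zeros_step d F) (s0, F s0) u').
have R : run coset_step (t0, (s0, F s0)) w' u' sfin.
  apply/(carry_RunE M_ge0 hpq hM _ _ _ sw' su'); split; rewrite /= ?gfold_foldl //.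
  rewrite dt0 dt1; apply/carries0E; rewrite coord_subw // !coord_cat_nseq0 cw /=; lia.
have sk : size (take (size w) u') = size w.
  by rewrite size_take; case: ifP => // /negbT; move: sz; rewrite size_cat size_nseq; lia.
move: R; rewrite /w' -(cat_take_drop (size w) u') => /(Run_split sk)[t [Rw Rn]].
move: su'; rewrite -(cat_take_drop (size w) u') inSigma_cat => /andP[stk sdr].
exists (t0, (s0, F s0)), (take (size w) u'), t; split=> //; first by split=> //; exists r.
exists (size u - size w)%N, (drop (size w) u'), sfin; split=> //=.
apply/zeros_steps_startP; exists u, (size w - size u)%N; split=> //.
by case/HK: Ku.
Qed.

Lemma preimage_cosetE w : preimage_cyc p q (z1, z2) w <->
  [/\ inSigma q w, ~ dom_witness p q w & coset_witness w].
Proof.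
split=> [[Dw [k /(psi_isE p q) cw]]|[sw nwit [r hr [u [Du [j /(psi_isE p q) cu]] cw]]]].
  have sw : inSigma q w by case: Dw.
  split=> //; first exact/(DomE hpq sw).
  have m_neq0 : m != 0 by lia.
  set j := (k %/ m)%Z; set r := (k %% m)%Z.
  have ek : k = j * m + r by rewrite /j /r -divz_eq.
  exists r; first by rewrite /r modz_ge0 //= -[m in _ < m]gtr0_norm ?ltz_mod.
  have [u Du cu] := Dom_coord_surj hpq (j * (m * z1), j * (m * z2)).
  exists u; first by split=> //; exists j; apply/psi_isE.
  by rewrite cw cu ek /=; congr pair; ring.
split; first exact/(DomE hpq sw).
by exists (j * m + r); apply/psi_isE; rewrite cw cu /=; congr pair; ring.
Qed.

Lemma regular_preimage_of_multiple : regular q (preimage_cyc p q (z1, z2)).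
Proof.
apply: (regular_recognizable
  (guess_lang_recognizable q (@dom_init p q) (@dom_step p q) (@dom_acc p q))
  (guess_lang_recognizable q coset_init coset_step coset_acc)) => w.
rewrite preimage_cosetE; split=> [[sw nwit cwit]|[sw [ndom cguess]]].
  by split=> //; split; [move/(dom_witness_guess hpq sw) | exact: coset_witness_guess].
by split=> //; [move/(dom_witness_guess hpq sw) | exact: coset_guess_witness].
Qed.

End Multiple.

Theorem mainTheorem6 (p q : int) (hpq : 1 + `|p| < `|q|) (hgcd : gcdz p q = 1) :
  (forall m : int, m != 0 ->
     ~ regular q (preimage_cyc p q (0, m)) /\ ~ regular q (preimage_cyc p q (m, 0)))
  /\
  (forall (zeta : int * int) (m : int), 1 < m ->
     ~ regular q (preimage_cyc p q zeta) ->
     ~ regular q (preimage_cyc p q (m * zeta.1, m * zeta.2))).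
Proof.
split=> [m m_neq0|[z1 z2] m m_gt1 not_reg [S [s0 [F [d HK]]]]].
  by split; [apply: preimage_xi_not_regular | apply: preimage_eta_not_regular].
by apply: not_reg; apply: (regular_preimage_of_multiple hpq _ HK); lia.
Qed.
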